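(* Let the data $\{Y_{ij}\}$, the true parameters $(\boldsymbol\nu^*,\mathbf B^* )$, the MLE $(\hat{\boldsymbol\nu},\hat{\mathbf B})$, the posterior weights $\hat\gamma_{ik}$, the pseudo-likelihoods $Q_j$, the candidate solutions $\tilde{\boldsymbol\beta}_j^{(m)}$, $m=1,\dots,K$, and the selected level $\tilde m_j$ be as described in the context, with $J$ and $K$ fixed and $N\to\infty$. Suppose that the following assumptions hold: (A1) (root-$N$ consistency of the MLE) $\|\hat{\boldsymbol\nu}-\boldsymbol\nu^*\|=O_p(N^{-1/2})$ and $\|\hat{\mathbf B}-\mathbf B^*\|_F=O_p(N^{-1/2})$, where $\|\cdot\|$ is the Euclidean norm and $\|\cdot\|_F$ the Frobenius norm, and the class labels of the MLE are aligned with the true labels; (A2) (interior) $0<\beta^*_{jk}<1$ and $\nu^*_k>0$ for all $j=1,\dots,J$ and $k=1,\dots,K$; (A3) the EBIC constant $\rho\ge 1$ does not depend on $N$. Then for each item $j=1,\dots,J$, $P(\tilde m_j=m_j^* )\to 1$ as $N\to\infty$, where $m_j^*$ is the number of distinct values among $\beta^*_{j1},\dots,\beta^*_{jK}$. Moreover, writing $\tilde{\boldsymbol\beta}_j^{(\tilde m_j)}=(\tilde\beta_{j1},\dots,\tilde\beta_{jK})^\top$ for the refined estimator of item $j$, as $N\to\infty$: 1. $P(\tilde\beta_{jg}=\tilde\beta_{jh})\to 1$ for all $g,h\in\{1,\dots,K\}$ with $\beta^*_{jg}=\beta^*_{jh}$; 2. $P(\tilde\beta_{jg}\neq\tilde\beta_{jh})\to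 1$ for all $g,h\in\{1,\dots,K\}$ with $\beta^*_{jg}\neq\beta^*_{jh}$.
   Context: Latent class model: $N$ respondents answer $J$ binary items, $Y_{ij}\in\{0,1\}$. Latent classes $\xi_1,\dots,\xi_N\in\{1,\dots,K\}$ are i.i.d. with $P(\xi_i=k)=\nu_k$ ($\nu_k\ge 0$, $\sum_k\nu_k=1$), $P(Y_{ij}=1\mid\xi_i=k)=\beta_{jk}$, and $Y_{i1},\dots,Y_{iJ}$ are conditionally independent given $\xi_i$ (local independence). Write $\boldsymbol\nu=(\nu_1,\dots,\nu_K)^\top$, $\mathbf B=(\beta_{jk})_{J\times K}$, $\boldsymbol\beta_j=(\beta_{j1},\dots,\beta_{jK})^\top$; the data are generated from true values $\boldsymbol\nu^*,\mathbf B^*$ with $K$ known. The marginal log-likelihood is $l(\boldsymbol\nu,\mathbf B)=\sum_{i=1}^N\log\big(\sum_{k=1}^K\nu_k\prod_{j=1}^J\beta_{jk}^{Y_{ij}}(1-\beta_{jk})^{1-Y_{ij}}\big)$ and $(\hat{\boldsymbol\nu},\hat{\mathbf B})$ is its maximizer (the MLE). For a vector $\mathbf v$, $\mathrm{card}(\mathbf v)$ denotes the number of distinct entries. Posterior weights: $\hat\gamma_{ik}=\dfrac{\hat\nu_k\prod_{j}\hat\beta_{jk}^{Y_{ij}}(1-\hat\beta_{jk})^{1-Y_{ij}}}{\sum_{h=1}^K\hat\nu_h\prod_{j}\hat\beta_{jh}^{Y_{ij}}(1-\hat\beta_{jh})^{1-Y_{ij}}}$, $\hat{\mathbf\Gamma}=(\hat\gamma_{ik})_{N\times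 K}$. Item-specific pseudo-likelihood: $Q_j(\boldsymbol\beta_j;\hat{\mathbf\Gamma})=\sum_{i=1}^N\sum_{k=1}^K\hat\gamma_{ik}\big(Y_{ij}\log\beta_{jk}+(1-Y_{ij})\log(1-\beta_{jk})\big)$. For an ordered partition $\mathcal C=(C_1,\dots,C_m)$ of $\{1,\dots,K\}$ into nonempty disjoint blocks, the constrained solution is the maximizer of $Q_j(\cdot;\hat{\mathbf\Gamma})$ over $\boldsymbol\beta_j$ that are constant on each block (the paper writes this as maximization over $\Theta_j(\mathcal C)=\{\boldsymbol\beta_j:\beta_{jk}=\beta_{jk'}\ \forall k,k'\in C_l;\ \beta_{jk}<\beta_{jk'}$ if $k\in C_l,k'\in C_{l'},l<l'\}$); for $k\in C_l$ it equals $\sum_i\sum_{k'\in C_l}\hat\gamma_{ik'}Y_{ij}\big/\sum_i\sum_{k'\in C_l}\hat\gamma_{ik'}$. Stepwise search (for each item $j$): let $\pi_j$ be a permutation with $\hat\beta_{j,\pi_j(1)}<\cdots<\hat\beta_{j,\pi_j(K)}$ (the entries of $\hat{\boldsymbol\beta}_j$ are assumed distinct, which holds with probability tending to one; ties broken arbitrarily otherwise). Set $\tilde{\boldsymbol\beta}_j^{(K)}=\hat{\boldsymbol\beta}_j$ and $\mathcal C_j^{(K)}=(\{\pi_j(1)\},\dots,\{\pi_j(K)\})$. For $s=K,K-1,\dots,2$: given $\mathcal C_j^{(s)}=(C_{j1}^{(s)},\dots,C_{js}^{(s)})$, for $b=1,\dots,s-1$ form $\mathcal C_{jb}^{(s-1)}$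 by merging the adjacent blocks $C_{jb}^{(s)}$ and $C_{j,b+1}^{(s)}$ (keeping the order of the others), and let $\tilde{\boldsymbol\beta}_{jb}^{(s-1)}$ be the constrained solution for $\mathcal C_{jb}^{(s-1)}$; choose $b_j^{(s-1)}=\arg\max_b Q_j(\tilde{\boldsymbol\beta}_{jb}^{(s-1)};\hat{\mathbf\Gamma})$ and set $\tilde{\boldsymbol\beta}_j^{(s-1)}=\tilde{\boldsymbol\beta}_{jb_j^{(s-1)}}^{(s-1)}$, $\mathcal C_j^{(s-1)}=\mathcal C_{jb_j^{(s-1)}}^{(s-1)}$. This yields candidates $\tilde{\boldsymbol\beta}_j^{(1)},\dots,\tilde{\boldsymbol\beta}_j^{(K)}$. Extended BIC: $\mathrm{EBIC}_j(m)=-2Q_j(\tilde{\boldsymbol\beta}_j^{(m)};\hat{\mathbf\Gamma})+m\log N+2m\log\rho$ with a constant $\rho\ge 1$, and $\tilde m_j=\arg\min_{1\le m\le K}\mathrm{EBIC}_j(m)$. The refined estimator for item $j$ is $\tilde{\boldsymbol\beta}_j^{(\tilde m_j)}$. *)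

From HB Require Import structures.
From mathcomp Require Import all_boot all_order all_algebra.
From mathcomp Require Import all_classical all_reals all_analysis.
Set Implicit Arguments. Unset Strict Implicit. Unset Printing Implicit Defensive.
Import Order.TTheory GRing.Theory Num.Theory.
Import numFieldNormedType.Exports.
Local Open Scope ring_scope.

Section LCM.
Variable R : realType.

Definition data (N J : nat) := {ffun 'I_N * 'I_J -> bool}.

Definition yv N J (Y : data N J) (i : 'I_N) (j : 'I_J) : R := (Y (i, j))%:R.

Definition bern (b : R) (y : bool) : R := if y then b else 1 - b.

Definition elog (x : R) : \bar R := if 0 < x then (ln x)%:E else -oo%E.

(* c * log x, with the convention 0 * log 0 = 0 (c >= 0). *)
Definition xlog (c x : R) : \bar R := if c == 0 then 0%E else (c%:E * elog x)%E.

Definition classlik N J K (B : 'I_J -> 'I_K -> R) (Y : data N J) (i : 'I_N) (k : 'I_K)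
  : R := \prod_(j < J) bern (B j k) (Y (i, j)).

Definition loglik N J K (nu : 'I_K -> R) (B : 'I_J -> 'I_K -> R) (Y : data N J)
  : \bar R := (\sum_(i < N) elog (\sum_(k < K) nu k * classlik B Y i k))%E.

Definition in_simplex K (nu : 'I_K -> R) : Prop :=
  (forall k, 0 <= nu k) /\ \sum_(k < K) nu k = 1.
Definition in_unit J K (B : 'I_J -> 'I_K -> R) : Prop :=
  forall j k, 0 <= B j k <= 1.

Definition is_MLE N J K (nu : 'I_K -> R) (B : 'I_J -> 'I_K -> R) (Y : data N J)
  : Prop :=
  [/\ in_simplex nu, in_unit B &
      forall (nu' : 'I_K -> R) (B' : 'I_J -> 'I_K -> R), in_simplex nu' -> in_unit B' ->
        (loglik nu' B' Y <= loglik nu B Y)%E].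

Definition gamma N J K (nu : 'I_K -> R) (B : 'I_J -> 'I_K -> R) (Y : data N J)
  (i : 'I_N) (k : 'I_K) : R :=
  nu k * classlik B Y i k / \sum_(h < K) nu h * classlik B Y i h.

Definition Qj N J K (gam : 'I_N -> 'I_K -> R) (Y : data N J) (j : 'I_J)
  (beta : 'I_K -> R) : \bar R :=
  (\sum_(i < N) \sum_(k < K)
     (xlog (gam i k * yv Y i j) (beta k) +
      xlog (gam i k * (1 - yv Y i j)) (1 - beta k)))%E.

(* Ordered partitions of {1..K}: sequences of blocks. *)
Definition block K (C : seq (seq 'I_K)) (k : 'I_K) : seq 'I_K :=
  nth [::] C (find (fun c : seq 'I_K => k \in c) C).

(* Constrained solution for the ordered partition C (closed form). *)
Definition csol N J K (gam : 'I_N -> 'I_K -> R) (Y : data N J) (j : 'I_J)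
  (C : seq (seq 'I_K)) (k : 'I_K) : R :=
  (\sum_(i < N) \sum_(k' <- block C k) gam i k' * yv Y i j) /
  (\sum_(i < N) \sum_(k' <- block C k) gam i k').

Definition merge_at (T : Type) (b : nat) (C : seq (seq T)) : seq (seq T) :=
  take b C ++ (nth [::] C b ++ nth [::] C b.+1) :: drop b.+2 C.

(* First maximizer / minimizer of f over {0, ..., n-1} (ties -> smallest index). *)
Definition first_argmax (f : nat -> \bar R) (n : nat) : nat :=
  foldl (fun best b => if (f best < f b)%E then b else best) 0 (iota 1 n.-1).
Definition first_argmin (f : nat -> \bar R) (n : nat) : nat :=
  foldl (fun best b => if (f b < f best)%E then b else best) 0 (iota 1 n.-1).

Section Search.
Variables (N J K : nat) (hnu : 'I_K -> R) (hB : 'I_J -> 'I_K -> R)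
  (Y : data N J) (j : 'I_J).

Definition hgam := gamma hnu hB Y.

Definition part_init : seq (seq 'I_K) :=
  [seq [:: k] | k <- sort (fun a b : 'I_K => hB j a <= hB j b) (enum 'I_K)].

Definition part_step (C : seq (seq 'I_K)) : seq (seq 'I_K) :=
  merge_at (first_argmax (fun b => Qj hgam Y j (csol hgam Y j (merge_at b C)))
                         (size C).-1) C.

(* C^(K - t) *)
Definition parts (t : nat) : seq (seq 'I_K) := iter t part_step part_init.

Definition cand (m : nat) : 'I_K -> R :=
  if m == K then hB j else csol hgam Y j (parts (K - m)).

Definition EBIC (rho : R) (m : nat) : \bar R :=
  (- (2%:E * Qj hgam Y j (cand m)) +
   (m%:R * ln (N%:R : R) + 2 * m%:R * ln rho)%:E)%E.

Definition mtilde (rho : R) : nat := (first_argmin (fun t => EBIC rho t.+1) K).+1.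

Definition refined (rho : R) : 'I_K -> R := cand (mtilde rho).
End Search.

Definition card_distinct K (beta : 'I_K -> R) : nat :=
  size (undup [seq beta k | k <- enum 'I_K]).

(* Probability of an event on the data under the latent class model with
   parameters (nu, B): joint law of (xi_1..xi_N, Y) summed over the event. *)
Definition prob N J K (nu : 'I_K -> R) (B : 'I_J -> 'I_K -> R)
  (E : pred (data N J)) : R :=
  \sum_(w : {ffun 'I_N -> 'I_K} * data N J | E w.2)
     \prod_(i < N) (nu (w.1 i) * \prod_(j < J) bern (B j (w.1 i)) (w.2 (i, j))).

Definition Op_root_N J K (nu : 'I_K -> R) (B : 'I_J -> 'I_K -> R)
  (X : forall N, data N J -> R) : Prop :=
  forall eps : R, 0 < eps -> exists M : R, exists N0 : nat, forall N : nat,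
    (N0 <= N)%N ->
    prob nu B (fun Y : data N J => M < Num.sqrt (N%:R) * `|X N Y|) < eps.

Definition vnorm K (v : 'I_K -> R) : R := Num.sqrt (\sum_(k < K) v k ^+ 2).
Definition frob J K (A : 'I_J -> 'I_K -> R) : R :=
  Num.sqrt (\sum_(j < J) \sum_(k < K) A j k ^+ 2).

End LCM.

From HB Require Import structures.
From mathcomp Require Import all_boot all_order all_algebra.
From mathcomp Require Import all_classical all_reals all_analysis.
From mathcomp Require Import ring lra.
Import Order.TTheory GRing.Theory Num.Theory.
Import numFieldNormedType.Exports.
Local Open Scope classical_set_scope.
Local Open Scope ring_scope.
Set Implicit Arguments. Unset Strict Implicit. Unset Printing Implicit Defensive.

(* On the event that the MLE is within [M / sqrt N] of the truth, which by (A1)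
   has probability at least [1 - e] for a suitable [M], the argument is
   deterministic. An interior MLE is stationary in each [beta_jk], and this is
   the EM fixed-point equation [sum_i gamma_ik Y_ij = hat beta_jk sum_i gamma_ik];
   hence [Q_j (hat beta_j) - Q_j beta = sum_k n_k KL (hat beta_jk | beta_k)] with
   class sizes [n_k = sum_i gamma_ik] of order [N]. Merging classes with equal
   true values therefore costs [O (N eps^2) = O (1)], while a block mixing
   distinct true values costs order [N]. So the greedy search merges only
   homogeneous blocks down to [m*_j] blocks, and the EBIC penalty [m log N]
   separates [m*_j] from larger levels (gain [O (1) < log N]) and from smaller
   ones (loss of order [N], far above [log N]). *)

Section RealInequalities.
Variable R : realType.
Implicit Types a b p q t x z : R.

Lemma ln_le_subr1 t : 0 < t -> ln t <= t - 1.
Proof.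
move=> t0; have := @le_ln1Dx R (t - 1).
have -> : 1 + (t - 1) = t by ring.
by apply; lra.
Qed.

Lemma ln_ge_1subV t : 0 < t -> 1 - t^-1 <= ln t.
Proof.
move=> t0; have it0 : 0 < t^-1 by rewrite invr_gt0.
have := ln_le_subr1 it0; rewrite lnV ?posrE //; lra.
Qed.

Lemma ln1Dx_ge z : -(1/2) <= z -> z - 2 * z ^+ 2 <= ln (1 + z).
Proof.
move=> hz; have h1 : 0 < 1 + z by lra.
apply: le_trans (ln_ge_1subV h1).
have -> : 1 - (1 + z)^-1 = z / (1 + z) by field; lra.
rewrite ler_pdivlMr //; nra.
Qed.

Lemma ln_le_2sqrt x : 0 < x -> ln x <= 2 * Num.sqrt x.
Proof.
move=> x0; have s0 : 0 < Num.sqrt x by rewrite sqrtr_gt0.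
have -> : x = Num.sqrt x ^+ 2 by rewrite sqr_sqrtr // ltW.
rewrite lnXn // sqrtr_sqr gtr0_norm // mulr2n.
have := ln_le_subr1 s0; lra.
Qed.

Definition bernKL a b := a * (ln a - ln b) + (1 - a) * (ln (1 - a) - ln (1 - b)).

Lemma bernKL_le a b : 0 < a < 1 -> 0 < b < 1 ->
  bernKL a b <= (a - b) ^+ 2 / (b * (1 - b)).
Proof.
move=> /andP[a0 a1] /andP[b0 b1].
have h1 : ln a - ln b <= a / b - 1.
  by rewrite -ln_div ?posrE //; apply: ln_le_subr1; exact: divr_gt0.
have h2 : ln (1 - a) - ln (1 - b) <= (1 - a) / (1 - b) - 1.
  rewrite -ln_div ?posrE ?subr_gt0 //; apply: ln_le_subr1; apply: divr_gt0; lra.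
have -> : (a - b) ^+ 2 / (b * (1 - b)) =
    a * (a / b - 1) + (1 - a) * ((1 - a) / (1 - b) - 1).
  by field; apply/andP; split; lra.
rewrite /bernKL; apply: lerD; apply: ler_wpM2l => //; lra.
Qed.

Lemma sqr_ln_ratio_ge p q : 0 < p -> 0 < q ->
  2 * (p ^+ 2 - p * q) <= p ^+ 2 * (ln (p ^+ 2) - ln (q ^+ 2)).
Proof.
move=> p0 q0; rewrite !lnXn // -mulrnBl -ln_div ?posrE //.
have := ln_ge_1subV (divr_gt0 p0 q0); rewrite invf_div => h.
have -> : 2 * (p ^+ 2 - p * q) = p ^+ 2 * ((1 - q / p) *+ 2) by rewrite mulr2n; field; lra.
by apply: ler_wpM2l; [exact: sqr_ge0 | rewrite !mulr2n lerD].
Qed.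

(* Via the Hellinger distance of the square roots. *)
Lemma bernKL_ge a b : 0 < a < 1 -> 0 < b < 1 -> (a - b) ^+ 2 / 4 <= bernKL a b.
Proof.
move=> /andP[a0 a1] /andP[b0 b1].
have sqrtK c : 0 <= c -> Num.sqrt c ^+ 2 = c by move=> c0; rewrite sqr_sqrtr.
set x := Num.sqrt a; set y := Num.sqrt b.
set u := Num.sqrt (1 - a); set w := Num.sqrt (1 - b).
have xx : x ^+ 2 = a by apply: sqrtK; lra.
have yy : y ^+ 2 = b by apply: sqrtK; lra.
have uu : u ^+ 2 = 1 - a by apply: sqrtK; lra.
have ww : w ^+ 2 = 1 - b by apply: sqrtK; lra.
have k1 := @sqr_ln_ratio_ge x y; rewrite xx yy !sqrtr_gt0 in k1.
have k2 := @sqr_ln_ratio_ge u w; rewrite uu ww !sqrtr_gt0 !subr_gt0 in k2.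
have /andP[x0 x1] : 0 <= x <= 1 by rewrite sqrtr_ge0 -sqrtr1 ler_sqrt; lra.
have /andP[y0 y1] : 0 <= y <= 1 by rewrite sqrtr_ge0 -sqrtr1 ler_sqrt; lra.
have hab : (a - b) ^+ 2 / 4 <= (x - y) ^+ 2.
  have -> : (a - b) ^+ 2 = (x - y) ^+ 2 * (x + y) ^+ 2 by rewrite -xx -yy; ring.
  rewrite ler_pdivrMr // ler_wpM2l ?sqr_ge0 // expr2; nra.
have exy : (x - y) ^+ 2 = a + b - 2 * (x * y) by rewrite -xx -yy; ring.
have euw : (u - w) ^+ 2 = (1 - a) + (1 - b) - 2 * (u * w) by rewrite -uu -ww; ring.
have := sqr_ge0 (u - w); rewrite /bernKL; lra.
Qed.

Lemma bernKL_ge0 a b : 0 < a < 1 -> 0 < b < 1 -> 0 <= bernKL a b.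
Proof. by move=> ha hb; apply: le_trans (bernKL_ge ha hb); rewrite divr_ge0 ?sqr_ge0. Qed.

Lemma dist_ge_sub_close x y x' y' e : `|x - x'| <= e -> `|y - y'| <= e ->
  `|x - y| - 2 * e <= `|x' - y'|.
Proof.
move=> hx hy; have := ler_distD x' x y; have := ler_distD y' x' y.
by rewrite [`|y' - y|]distrC; lra.
Qed.

Lemma prodr_gt0_le_factor (I : finType) (P : pred I) (F : I -> R) (i0 : I) :
  (forall i, P i -> 0 < F i <= 1) -> P i0 -> 0 < \prod_(i | P i) F i <= F i0.
Proof.
move=> hF Pi0; apply/andP; split; first by apply: prodr_gt0 => i /hF /andP[].
rewrite (bigD1 i0) //=; have /andP[f0 f1] := hF i0 Pi0.
apply: ler_piMr; first exact: ltW.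
apply: prodr_ile1 => i /andP[Pi _]; by have /andP[g0 g1] := hF i Pi; rewrite g1 ltW.
Qed.

Lemma eq0_of_le_sqr (D E mu : R) : 0 < mu -> 0 <= E ->
  (forall h, `|h| <= mu -> h * D <= h ^+ 2 * E) -> D = 0.
Proof.
move=> mu0 E0 H; apply/eqP/negPn/negP => D0.
have DD : 0 < D * D by rewrite -expr2 lt_def sqrf_eq0 D0 sqr_ge0.
have muE : 0 <= mu * E by rewrite mulr_ge0 // ltW.
have nD := normr_ge0 D.
set den := (`|D| + 1) * (mu * E + 1).
have den0 : 0 < den by rewrite /den; nra.
set eta := mu / den.
have eta0 : 0 < eta by rewrite divr_gt0.
have small : `|eta * D| <= mu.
  rewrite normrM gtr0_norm // mulrAC ler_pdivrMr // ler_pM2l // /den; nra.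
have etaE : eta * E < 1 by rewrite /eta mulrAC ltr_pdivrMr // mul1r /den; nra.
have := H _ small.
have -> : (eta * D) ^+ 2 * E = eta * (D * D) * (eta * E) by ring.
have -> : eta * D * D = eta * (D * D) by ring.
by rewrite leNgt gtr_pMr ?etaE // mulr_gt0.
Qed.

End RealInequalities.

Section FirstArgExtremum.
Variable R : realType.
Local Open Scope ereal_scope.
Implicit Types f : nat -> \bar R.

Lemma foldl_argmax f b0 l :
  let r := foldl (fun best b => if f best < f b then b else best) b0 l in
  r \in b0 :: l /\ forall t, t \in b0 :: l -> f t <= f r.
Proof.
elim: l b0 => [|x l IH] b0 /=.
  by split; [rewrite inE | move=> t; rewrite inE => /eqP->].
set b1 := if f b0 < f x then x else b0.
have [Hm Hf] := IH b1.
have hb0 : f b0 <= f b1 by rewrite /b1; case: ifP => // /ltW.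
have hx : f x <= f b1 by rewrite /b1; case: ifP => // /negbT; rewrite -leNgt.
split.
  move: Hm; rewrite !inE => /orP[/eqP->|->]; last by rewrite !orbT.
  by rewrite /b1; case: ifP => _; rewrite eqxx ?orbT.
move=> t; rewrite !inE => /orP[/eqP->|/orP[/eqP->|tl]].
- exact: le_trans hb0 (Hf _ (mem_head _ _)).
- exact: le_trans hx (Hf _ (mem_head _ _)).
- by apply: Hf; rewrite inE tl orbT.
Qed.

Lemma first_argmax_spec f n : (0 < n)%N ->
  (first_argmax f n < n)%N /\ forall t, (t < n)%N -> f t <= f (first_argmax f n).
Proof.
case: n => // n _; have [Hm Hf] := foldl_argmax f 0 (iota 1 n).
split; first by move: Hm; rewrite -[_ :: _]/(iota 0 n.+1) mem_iota.
by move=> t tn; apply: Hf; rewrite -[_ :: _]/(iota 0 n.+1) mem_iota.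
Qed.

Lemma first_argminE f n : first_argmin f n = first_argmax (fun t => - f t) n.
Proof.
by rewrite /first_argmin /first_argmax; congr foldl; do 2!apply: funext => ?; rewrite lteN2.
Qed.

Lemma first_argmin_unique f n t0 : (t0 < n)%N ->
  (forall t, (t < n)%N -> t != t0 -> f t0 < f t) -> first_argmin f n = t0.
Proof.
move=> t0n H; have [tn Hmax] := first_argmax_spec (fun t => - f t) (leq_ltn_trans (leq0n _) t0n).
rewrite first_argminE; apply/eqP/negPn/negP => ne.
by have := Hmax t0 t0n; rewrite leeN2 leNgt H.
Qed.

End FirstArgExtremum.

Section SeqLemmas.
Variable T : eqType.
Implicit Types (s : seq T) (C : seq (seq T)).

Lemma take_nth2_drop (x0 : T) s b : (b.+1 < size s)%N ->
  s = take b s ++ nth x0 s b :: nth x0 s b.+1 :: drop b.+2 s.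
Proof.
move=> hb; rewrite -{1}(cat_take_drop b s); congr (_ ++ _).
rewrite (drop_nth x0); last exact: ltn_trans hb.
by rewrite (drop_nth x0).
Qed.

Lemma subseq_take_nth_drop2 (x0 : T) s b : (b.+1 < size s)%N ->
  subseq (take b s ++ nth x0 s b :: drop b.+2 s) s.
Proof.
move=> hb; rewrite [X in subseq _ X](take_nth2_drop x0 hb) subseq_cat2l /= eqxx.
exact: subseq_cons.
Qed.

Lemma uniq_map_inj_in (U : eqType) (f : T -> U) s :
  uniq (map f s) -> {in s &, injective f}.
Proof.
elim: s => [|z s IH] //= /andP[fz Us] x y; rewrite !inE.
move=> /orP[/eqP->|xs] /orP[/eqP->|ys] // e.
- by move: fz; rewrite e (map_f f ys).
- by move: fz; rewrite -e (map_f f xs).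
- exact: IH.
Qed.

End SeqLemmas.

Lemma sorted_adjacent_eq d (T : porderType d) (x0 : T) (s : seq T) :
  sorted <=%O s -> ~~ uniq s ->
  exists i, (i.+1 < size s)%N /\ nth x0 s i = nth x0 s i.+1.
Proof.
elim: s => [|x s IH] //= Hs; rewrite negb_and negbK => /orP[xs|nus]; last first.
  by have [i [hi he]] := IH (path_sorted Hs) nus; exists i.+1.
case: s Hs xs IH => [|y s] //= /andP[xy Hp] xs _; exists 0%N; split => //=.
have /allP Ha := order_path_min le_trans Hp.
move: xs; rewrite inE => /orP[/eqP -> //|/Ha yx].
by apply/eqP; rewrite eq_le xy yx.
Qed.

Section Partitions.
Variable K : nat.
Implicit Types C : seq (seq 'I_K).

Lemma block_in C (k : 'I_K) : k \in flatten C -> block C k \in C /\ k \in block C k.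
Proof.
move=> /flattenP[X XC kX].
have hC : has (fun c : seq 'I_K => k \in c) C by apply/hasP; exists X.
by split; rewrite /block ?(nth_find [::] hC) // mem_nth // -has_find.
Qed.

Lemma block_eq_of_mem C (X : seq 'I_K) (k : 'I_K) : uniq (flatten C) ->
  X \in C -> k \in X -> block C k = X.
Proof.
elim: C => [|X0 C IH] //= U.
rewrite cat_uniq in U; case/and3P: U => U0 D U1.
rewrite inE /block /= => /orP[/eqP->|XC] kX; first by rewrite kX.
case: ifP => kX0; last exact: IH.
have kC : k \in flatten C by apply/flattenP; exists X.
by move/hasPn: D => /(_ k kC); rewrite /= kX0.
Qed.

Lemma flatten_merge_at C b : (b.+1 < size C)%N -> flatten (merge_at b C) = flatten C.
Proof.
move=> hb; rewrite {2}(take_nth2_drop [::] hb) /merge_at !flatten_cat /=.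
by rewrite !catA.
Qed.

Lemma size_merge_at C b : (b.+1 < size C)%N -> size (merge_at b C) = (size C).-1.
Proof.
by move=> hb; rewrite {2}(take_nth2_drop [::] hb) /merge_at !size_cat /= !addnS.
Qed.

Lemma mem_merge_at C b (X : seq 'I_K) : X \in merge_at b C ->
  X \in C \/ X = nth [::] C b ++ nth [::] C b.+1.
Proof.
by rewrite /merge_at mem_cat inE => /orP[/mem_take|/orP[/eqP->|/mem_drop]]; auto.
Qed.

End Partitions.

(** * The latent class model *)

Section Probability.
Variables (R : realType) (N J K : nat) (nu : 'I_K -> R) (B : 'I_J -> 'I_K -> R).
Hypothesis nu_ge0 : forall k, 0 <= nu k.
Hypothesis nu_sum1 : \sum_(k < K) nu k = 1.
Hypothesis B01 : forall j k, 0 <= B j k <= 1.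
Implicit Types E : pred (data N J).

Definition joint_weight (w : {ffun 'I_N -> 'I_K} * data N J) : R :=
  \prod_(i < N) (nu (w.1 i) * \prod_(j < J) bern (B j (w.1 i)) (w.2 (i, j))).

Lemma bern_ge0 (x : R) y : 0 <= x <= 1 -> 0 <= bern x y.
Proof. by case/andP=> x0 x1; case: y => //=; rewrite subr_ge0. Qed.

Lemma joint_weight_ge0 w : 0 <= joint_weight w.
Proof.
apply: prodr_ge0 => i _; rewrite mulr_ge0 //.
by apply: prodr_ge0 => j _; apply: bern_ge0.
Qed.

Lemma probE E : prob nu B E = \sum_(w | E w.2) joint_weight w.
Proof. by []. Qed.

Lemma prob_ge0 E : 0 <= prob nu B E.
Proof. by rewrite probE sumr_ge0 // => w _; exact: joint_weight_ge0. Qed.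

Lemma le_prob E1 E2 : (forall Y, E1 Y -> E2 Y) -> prob nu B E1 <= prob nu B E2.
Proof.
move=> H; rewrite !probE [X in _ <= X](bigID (fun w => E1 w.2)) /=.
have -> : \sum_(w | E2 w.2 && E1 w.2) joint_weight w = \sum_(w | E1 w.2) joint_weight w.
  by apply: eq_bigl => w; case E: (E1 w.2); rewrite ?andbT ?andbF ?(H _ E).
by rewrite lerDl sumr_ge0 // => w _; exact: joint_weight_ge0.
Qed.

Lemma prob_predT : prob nu B (predT : pred (data N J)) = 1.
Proof.
rewrite probE -(pair_big predT predT (fun xi Y => joint_weight (xi, Y))) /=.
transitivity (\sum_(xi : {ffun 'I_N -> 'I_K}) \prod_(i < N) nu (xi i)); last first.
  rewrite -(bigA_distr_bigA (fun (i : 'I_N) (k : 'I_K) => nu k)) /=.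
  by rewrite big1 // => i _; exact: nu_sum1.
apply: eq_bigr => xi _; rewrite /joint_weight /=.
under eq_bigr do rewrite big_split /=.
rewrite -big_distrr /= -[RHS]mulr1; congr (_ * _).
under eq_bigr => Y _.
  rewrite (pair_big predT predT
    (fun (i : 'I_N) (j : 'I_J) => bern (B j (xi i)) (Y (i, j)))) /=.
  under eq_bigr => p _ do rewrite -surjective_pairing.
  over.
rewrite -(bigA_distr_bigA (fun (p : 'I_N * 'I_J) b => bern (B p.2 (xi p.1)) b)) /=.
by rewrite big1 // => p _; rewrite big_bool /=; ring.
Qed.

Lemma probC E : prob nu B E + prob nu B (predC E) = 1.
Proof.
rewrite -prob_predT !probE [RHS](bigID (fun w => E w.2)) /=.
by congr (_ + _); apply: eq_bigl.
Qed.

Lemma prob_le1 E : prob nu B E <= 1.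
Proof. by rewrite -(probC E) lerDl prob_ge0. Qed.

Lemma prob_predU_le E1 E2 :
  prob nu B (predU E1 E2) <= prob nu B E1 + prob nu B E2.
Proof.
rewrite !probE [X in X <= _]big_mkcond [X in _ <= X + _]big_mkcond.
rewrite [X in _ <= _ + X]big_mkcond -big_split /=; apply: ler_sum => w _.
case: (E1 w.2); case: (E2 w.2) => //=; rewrite ?add0r ?addr0 //.
by rewrite lerDl joint_weight_ge0.
Qed.

End Probability.

Section PosteriorWeights.
Variables (R : realType) (N J K : nat) (nu : 'I_K -> R) (B : 'I_J -> 'I_K -> R)
  (Y : data N J) (lo : R).
Hypothesis nu_gt0 : forall k, 0 < nu k.
Hypothesis nu_sum1 : \sum_(k < K) nu k = 1.
Hypothesis lo_gt0 : 0 < lo.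
Hypothesis B_in : forall j k, lo <= B j k <= 1 - lo.

Definition marglik i := \sum_(h < K) nu h * classlik B Y i h.

Lemma bern_in (x : R) y : lo <= x <= 1 - lo -> lo <= bern x y <= 1.
Proof. by have := lo_gt0 => l0 /andP[h1 h2]; case: y => /=; apply/andP; split; lra. Qed.

Lemma classlik_ge i k : lo ^+ J <= classlik B Y i k.
Proof.
rewrite /classlik -[J in lo ^+ J]card_ord -prodr_const.
apply: ler_prod => j _; have /andP[h1 h2] := bern_in (Y (i, j)) (B_in j k).
by rewrite h1 ltW.
Qed.

Lemma classlik_gt0 i k : 0 < classlik B Y i k.
Proof. by apply: lt_le_trans (classlik_ge i k); apply: exprn_gt0. Qed.

Lemma classlik_le1 i k : classlik B Y i k <= 1.
Proof.
apply: prodr_ile1 => j _; have /andP[h1 h2] := bern_in (Y (i, j)) (B_in j k).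
by rewrite h2 andbT (le_trans _ h1) ?ltW.
Qed.

Lemma marglik_ge_term i k : nu k * classlik B Y i k <= marglik i.
Proof.
rewrite /marglik (bigD1 k) //= lerDl; apply: sumr_ge0 => h _.
by rewrite mulr_ge0 ?ltW ?classlik_gt0.
Qed.

Lemma marglik_gt0 i : (0 < K)%N -> 0 < marglik i.
Proof.
move=> K0; apply: lt_le_trans (marglik_ge_term i (Ordinal K0)).
by rewrite mulr_gt0 ?classlik_gt0.
Qed.

Lemma marglik_le1 i : marglik i <= 1.
Proof.
rewrite -nu_sum1 /marglik; apply: ler_sum => h _.
by apply: ler_piMr; [exact: ltW | exact: classlik_le1].
Qed.

Lemma gamma_le1 i k : gamma nu B Y i k <= 1.
Proof.
have K0 : (0 < K)%N by apply: leq_ltn_trans (ltn_ord k).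
by rewrite /gamma ler_pdivrMr ?mul1r ?marglik_ge_term // marglik_gt0.
Qed.

Lemma gamma_ge i k : nu k * lo ^+ J <= gamma nu B Y i k.
Proof.
have K0 : (0 < K)%N by apply: leq_ltn_trans (ltn_ord k).
rewrite /gamma ler_pdivlMr -/(marglik i) ?marglik_gt0 //.
apply: le_trans (_ : nu k * lo ^+ J * 1 <= _).
  by apply: ler_wpM2l; rewrite ?marglik_le1 // mulr_ge0 ?exprn_ge0 ?ltW.
by rewrite mulr1; apply: ler_wpM2l; rewrite ?classlik_ge ?ltW.
Qed.

End PosteriorWeights.

(** * Stationarity of the MLE *)

Lemma loglikE (R : realType) N J K (nu : 'I_K -> R) (B : 'I_J -> 'I_K -> R)
    (Y : data N J) : (forall i, 0 < marglik nu B Y i) ->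
  loglik nu B Y = (\sum_(i < N) ln (marglik nu B Y i))%:E.
Proof.
by move=> H; rewrite /loglik -sumEFin; apply: eq_bigr => i _; rewrite /elog H.
Qed.

Section MLEStationarity.
Variables (R : realType) (N J K : nat) (nu : 'I_K -> R) (B : 'I_J -> 'I_K -> R)
  (Y : data N J) (lo : R) (j : 'I_J) (k : 'I_K).
Hypothesis mle : is_MLE nu B Y.
Hypothesis nu_gt0 : forall k, 0 < nu k.
Hypothesis lo_gt0 : 0 < lo.
Hypothesis B_in : forall j k, lo <= B j k <= 1 - lo.

Let L_gt0 i : 0 < marglik nu B Y i.
Proof. exact: (marglik_gt0 Y nu_gt0 lo_gt0 B_in i (leq_ltn_trans (leq0n _) (ltn_ord k))). Qed.

Let others i := \prod_(j' < J | j' != j) bern (B j' k) (Y (i, j')).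
Let sgn i : R := if Y (i, j) then 1 else -1.

(* The derivative of [ln (marglik nu B Y i)] in the entry [B j k]. *)
Let score i := nu k * others i * sgn i / marglik nu B Y i.

Let shift h j' k' := if (j' == j) && (k' == k) then B j k + h else B j' k'.

Lemma classlik_shift h i k' : classlik (shift h) Y i k' =
  if k' == k then bern (B j k + h) (Y (i, j)) * others i else classlik B Y i k'.
Proof.
case: eqP => [->|/eqP nk].
  rewrite /classlik (bigD1 j) //= /shift !eqxx /=; congr (_ * _).
  by apply: eq_bigr => j' /negbTE ->.
by apply: eq_bigr => j' _; rewrite /shift (negbTE nk) andbF.
Qed.

Lemma marglik_shift h i :
  marglik nu (shift h) Y i = marglik nu B Y i * (1 + h * score i).
Proof.
have L0 := L_gt0 i.
have -> : marglik nu B Y i * (1 + h * score i) =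
    marglik nu B Y i + h * (nu k * others i * sgn i) by rewrite /score; field; lra.
rewrite /marglik (bigD1 k) //= [in RHS](bigD1 k) //= classlik_shift eqxx.
rewrite (eq_bigr (fun k' => nu k' * classlik B Y i k')); last first.
  by move=> k' /negbTE nk; rewrite classlik_shift nk.
rewrite /classlik (bigD1 j) //= -/(others i) /sgn.
by case: (Y (i, j)) => /=; ring.
Qed.

Lemma gamma_residual i :
  gamma nu B Y i k * (yv R Y i j - B j k) = B j k * (1 - B j k) * score i.
Proof.
have L0 := L_gt0 i.
rewrite /gamma /score /sgn /yv /classlik (bigD1 j) //= -/(others i) -/(marglik nu B Y i).
by case: (Y (i, j)) => /=; field; lra.
Qed.

Let X := 1 + \sum_(i < N) `|score i|.
Let mu := lo / X.

Let X_ge1 : 1 <= X.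
Proof. by rewrite /X lerDl sumr_ge0. Qed.

Let score_small h i : `|h| <= mu -> `|h * score i| <= lo.
Proof.
move=> hmu; have X0 : 0 < X by apply: lt_le_trans X_ge1.
have sX : `|score i| <= X.
  by rewrite /X (bigD1 i) //= addrCA lerDl addr_ge0 ?sumr_ge0.
rewrite normrM (le_trans (ler_pM _ _ hmu sX)) // /mu divfK ?gt_eqF //.
Qed.

Lemma sum_ln_shift_le0 h : `|h| <= mu -> \sum_(i < N) ln (1 + h * score i) <= 0.
Proof.
move=> hmu; have /andP[lo1 lo2] := B_in j k.
have X0 : 0 < X by apply: lt_le_trans X_ge1.
have hlo : `|h| <= lo.
  by apply: le_trans hmu _; rewrite /mu ler_pdivrMr // ler_peMr // ltW.
have [hl hr] : - lo <= h /\ h <= lo by move: hlo; rewrite ler_norml => /andP[].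
have pos i : 0 < 1 + h * score i.
  by have := score_small i hmu; rewrite ler_norml => /andP[s1 s2]; lra.
have shift_unit : in_unit (shift h).
  move=> j' k'; rewrite /shift; case: ifP => _; first by apply/andP; split; lra.
  by have /andP[h1 h2] := B_in j' k'; apply/andP; split; lra.
have shift_pos i : 0 < marglik nu (shift h) Y i by rewrite marglik_shift mulr_gt0.
case: mle => simplex _ /(_ nu (shift h) simplex shift_unit).
rewrite !loglikE // lee_fin.
under eq_bigr do rewrite marglik_shift lnM ?posrE //.
by rewrite big_split /= gerDl.
Qed.

Lemma score_sum_eq0 : \sum_(i < N) score i = 0.
Proof.
have X0 : 0 < X by apply: lt_le_trans X_ge1.
apply: (@eq0_of_le_sqr _ _ (2 * \sum_(i < N) score i ^+ 2) mu).
- by rewrite divr_gt0.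
- by rewrite mulr_ge0 ?sumr_ge0 // => i _; rewrite sqr_ge0.
move=> h hmu; have := sum_ln_shift_le0 hmu.
have half i : -(1/2) <= h * score i.
  have /andP[lo1 lo2] := B_in j k.
  by have := score_small i hmu; rewrite ler_norml => /andP[s1 s2]; lra.
have lb : \sum_(i < N) (h * score i - 2 * (h * score i) ^+ 2) <=
          \sum_(i < N) ln (1 + h * score i).
  by apply: ler_sum => i _; apply: ln1Dx_ge.
rewrite sumrB -mulr_sumr in lb.
have sq : \sum_(i < N) 2 * (h * score i) ^+ 2 = h ^+ 2 * (2 * \sum_(i < N) score i ^+ 2).
  by rewrite !mulr_sumr; apply: eq_bigr => i _; ring.
rewrite sq in lb; lra.
Qed.

(* Stationarity of the interior MLE in [B j k] is the EM fixed-point equation. *)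
Lemma mle_EM_fixed_point :
  \sum_(i < N) gamma nu B Y i k * yv R Y i j = B j k * \sum_(i < N) gamma nu B Y i k.
Proof.
apply/eqP; rewrite -subr_eq0 mulr_sumr -sumrB.
rewrite (eq_bigr (fun i => gamma nu B Y i k * (yv R Y i j - B j k))); last by move=> i _; ring.
by rewrite (eq_bigr _ (fun i _ => gamma_residual i)) -mulr_sumr score_sum_eq0 mulr0.
Qed.

End MLEStationarity.

(** * The pseudo-likelihood at the MLE and the stepwise search *)

Lemma wmean_in (R : realType) (I : eqType) (s : seq I) (w v : I -> R) (a b : R) :
  (forall x, x \in s -> 0 <= w x) -> 0 < \sum_(x <- s) w x ->
  (forall x, x \in s -> a <= v x <= b) ->
  a <= (\sum_(x <- s) v x * w x) / \sum_(x <- s) w x <= b.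
Proof.
move=> w0 W0 hv; rewrite ler_pdivlMr // ler_pdivrMr // !mulr_sumr.
apply/andP; split; rewrite big_seq [X in _ <= X]big_seq; apply: ler_sum => x xs;
  by apply: ler_wpM2r; [exact: w0 | case/andP: (hv x xs)].
Qed.

Lemma xlogE (R : realType) (c x : R) : 0 < x -> xlog c x = (c * ln x)%:E.
Proof.
move=> x0; rewrite /xlog; case: eqP => [->|_]; first by rewrite mul0r.
by rewrite /elog x0 EFinM.
Qed.

Section PseudoLikelihoodAtMLE.
Variables (R : realType) (N J K : nat) (nu : 'I_K -> R) (B : 'I_J -> 'I_K -> R)
  (Y : data N J) (j : 'I_J) (nu0 lo : R).
Hypothesis mle : is_MLE nu B Y.
Hypothesis nu0_gt0 : 0 < nu0.
Hypothesis nu_ge : forall k, nu0 <= nu k.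
Hypothesis lo_gt0 : 0 < lo.
Hypothesis B_in : forall j k, lo <= B j k <= 1 - lo.
Hypothesis N_gt0 : (0 < N)%N.
Implicit Types (C : seq (seq 'I_K)) (beta : 'I_K -> R).

Let nu_gt0 k : 0 < nu k. Proof. exact: lt_le_trans (nu_ge k). Qed.
Let nu_sum1 : \sum_(k < K) nu k = 1. Proof. by case: mle => -[]. Qed.
Local Notation gam := (hgam nu B Y).

Definition class_size k := \sum_(i < N) gam i k.

Lemma class_size_ge k : N%:R * (nu0 * lo ^+ J) <= class_size k.
Proof.
have -> : N%:R * (nu0 * lo ^+ J) = \sum_(i < N) (nu0 * lo ^+ J).
  by rewrite sumr_const card_ord mulr_natl.
apply: ler_sum => i _.
apply: le_trans (gamma_ge Y nu_gt0 nu_sum1 lo_gt0 B_in i k).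
by apply: ler_wpM2r; [rewrite exprn_ge0 // ltW | exact: nu_ge].
Qed.

Lemma class_size_gt0 k : 0 < class_size k.
Proof.
by apply: lt_le_trans (class_size_ge k); rewrite !mulr_gt0 ?ltr0n ?exprn_gt0.
Qed.

Lemma class_size_le k : class_size k <= N%:R.
Proof.
have -> : N%:R = \sum_(i < N) (1 : R) by rewrite sumr_const card_ord.
apply: ler_sum => i _; exact: (gamma_le1 Y nu_gt0 lo_gt0 B_in).
Qed.

Lemma class_sum_Y k : \sum_(i < N) gam i k * yv R Y i j = B j k * class_size k.
Proof. exact: (mle_EM_fixed_point j k mle nu_gt0 lo_gt0 B_in). Qed.

(* [Q_j] at the MLE weights depends on the data only through the class sizes. *)
Definition Qclass beta :=
  \sum_(k < K) class_size k * (B j k * ln (beta k) + (1 - B j k) * ln (1 - beta k)).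

Lemma QjE beta : (forall k, 0 < beta k < 1) -> Qj gam Y j beta = (Qclass beta)%:E.
Proof.
move=> b01; rewrite /Qj.
have term i k : (xlog (gam i k * yv R Y i j) (beta k) +
      xlog (gam i k * (1 - yv R Y i j)) (1 - beta k))%E =
   (gam i k * yv R Y i j * ln (beta k) + gam i k * (1 - yv R Y i j) * ln (1 - beta k))%:E.
  by have /andP[b0 b1] := b01 k; rewrite !xlogE ?subr_gt0.
rewrite (eq_bigr _ (fun i _ => eq_bigr _ (fun k _ => term i k))).
rewrite (eq_bigr _ (fun i _ => sumEFin _ _ _)) sumEFin; congr (_%:E).
rewrite exchange_big /Qclass; apply: eq_bigr => k _.
rewrite big_split /= -!mulr_suml.
have -> : \sum_(i < N) gam i k * (1 - yv R Y i j) = class_size k - B j k * class_size k.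
  by rewrite -class_sum_Y /class_size -sumrB; apply: eq_bigr => i _; ring.
by rewrite class_sum_Y; ring.
Qed.

Lemma B_in01 k : 0 < B j k < 1.
Proof. by have := lo_gt0 => l0; have /andP[h1 h2] := B_in j k; apply/andP; split; lra. Qed.

Lemma Qclass_loss beta : (forall k, 0 < beta k < 1) ->
  Qclass (B j) - Qclass beta = \sum_(k < K) class_size k * bernKL (B j k) (beta k).
Proof. by move=> b01; rewrite /Qclass -sumrB; apply: eq_bigr => k _; rewrite /bernKL; ring. Qed.

Lemma Qclass_le beta : (forall k, 0 < beta k < 1) -> Qclass beta <= Qclass (B j).
Proof.
move=> b01; rewrite -subr_ge0 Qclass_loss //; apply: sumr_ge0 => k _.
by rewrite mulr_ge0 ?bernKL_ge0 ?B_in01 // ltW ?class_size_gt0.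
Qed.

Definition is_partition C := uniq (flatten C) /\ forall k, k \in flatten C.

Lemma csolE C k : csol gam Y j C k =
  (\sum_(k' <- block C k) B j k' * class_size k') / (\sum_(k' <- block C k) class_size k').
Proof.
rewrite /csol exchange_big /= [X in _ / X]exchange_big /=; congr (_ / _).
by apply: eq_bigr => k' _; exact: class_sum_Y.
Qed.

Lemma block_size_gt0 C k : k \in block C k -> 0 < \sum_(k' <- block C k) class_size k'.
Proof.
move=> kb; apply: lt_le_trans (class_size_gt0 k) _.
by rewrite (big_rem k kb) /= lerDl sumr_ge0 // => k' _; rewrite ltW ?class_size_gt0.
Qed.

Lemma csol_wmean C k a b : is_partition C ->
  (forall k', k' \in block C k -> a <= B j k' <= b) -> a <= csol gam Y j C k <= b.
Proof.
case=> _ H hB; rewrite csolE; have [_ kb] := block_in (H k).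
by apply: wmean_in; rewrite ?block_size_gt0 // => k' _; rewrite ltW ?class_size_gt0.
Qed.

Lemma csol_in01 C k : is_partition C -> 0 < csol gam Y j C k < 1.
Proof.
move=> P; have /andP[h1 h2] := csol_wmean (k := k) P (fun k' _ => B_in j k').
by have := lo_gt0 => l0; apply/andP; split; lra.
Qed.

Variables (Bs : 'I_J -> 'I_K -> R) (eps gap : R).
Hypothesis B_close : forall k, `|B j k - Bs j k| <= eps.
Hypothesis gap_gt0 : 0 < gap.
Hypothesis gap_le : forall g h, Bs j g != Bs j h -> gap <= `|Bs j g - Bs j h|.
Hypothesis eps_le_gap : 4 * eps <= gap.

Definition homogeneous C :=
  forall X, X \in C -> forall x y, x \in X -> y \in X -> Bs j x = Bs j y.
Definition mixed C :=
  exists2 X, X \in C & exists x y, [/\ x \in X, y \in X & Bs j x != Bs j y].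

Lemma homogeneous_or_mixed C : homogeneous C \/ mixed C.
Proof.
case: (boolP (all (fun X => all (fun x => all (fun y => Bs j x == Bs j y) X) X) C)).
  move=> /allP H; left => X XC x y xX yX.
  by have /allP /(_ x xX) /allP /(_ y yX) /eqP := H X XC.
case/allPn => X XC /allPn [x xX /allPn [y yX ne]].
by right; exists X => //; exists x, y.
Qed.

Lemma csol_close C k : is_partition C -> homogeneous C ->
  `|csol gam Y j C k - Bs j k| <= eps.
Proof.
move=> P hom; have [bC kb] := block_in (P.2 k).
rewrite ler_distl; apply: csol_wmean => // k' k'b.
by rewrite -ler_distl (hom _ bC k k') //; exact: B_close.
Qed.

Definition loss_homog := N%:R * K%:R * (8 * eps ^+ 2 / lo).
Definition loss_mixed := N%:R * (nu0 * lo ^+ J) * (gap ^+ 2 / 64).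

Lemma Qclass_loss_homog C : is_partition C -> homogeneous C ->
  Qclass (B j) - Qclass (csol gam Y j C) <= loss_homog.
Proof.
move=> P hom; rewrite Qclass_loss; last by move=> k; exact: csol_in01.
have -> : loss_homog = \sum_(k < K) N%:R * (8 * eps ^+ 2 / lo).
  by rewrite sumr_const card_ord -mulr_natr /loss_homog; ring.
apply: ler_sum => k _.
have /andP[plo phi] := csol_wmean (k := k) P (fun k' _ => B_in j k').
set p := csol gam Y j C k in plo phi *.
have /andP[lo1 lo2] := B_in j k.
have sq : (B j k - p) ^+ 2 <= 4 * eps ^+ 2.
  move: (B_close k) (csol_close k P hom); rewrite -/p !ler_distl.
  move=> /andP[? ?] /andP[? ?]; nra.
have pp : lo / 2 <= p * (1 - p).
  have l0 := lo_gt0.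
  have h1 : 0 <= (p - lo) * (1 - lo - p) by apply: mulr_ge0; lra.
  have h2 : 0 <= lo * (1 - 2 * lo) by apply: mulr_ge0; lra.
  nra.
have kl : bernKL (B j k) p <= 8 * eps ^+ 2 / lo.
  apply: le_trans (bernKL_le (B_in01 k) (csol_in01 k P)) _.
  rewrite ler_pdivrMr; last by apply: lt_le_trans pp; rewrite divr_gt0.
  apply: le_trans sq _.
  have -> : 8 * eps ^+ 2 / lo * (p * (1 - p)) = 4 * eps ^+ 2 * (p * (1 - p) / (lo / 2)).
    by field; rewrite gt_eqF.
  apply: ler_peMr; first by rewrite mulr_ge0 ?sqr_ge0.
  by rewrite ler_pdivlMr ?mul1r // divr_gt0.
apply: ler_pM; [exact: ltW (class_size_gt0 k) | | exact: class_size_le | exact: kl].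
exact: bernKL_ge0 (B_in01 k) (csol_in01 k P).
Qed.

Lemma Qclass_loss_mixed C : is_partition C -> mixed C ->
  loss_mixed <= Qclass (B j) - Qclass (csol gam Y j C).
Proof.
move=> P [X XC [x [y [xX yX nxy]]]].
rewrite Qclass_loss; last by move=> k; exact: csol_in01.
set p := csol gam Y j C.
have pxy : p x = p y by rewrite /p !csolE !(block_eq_of_mem P.1 XC).
have far z : gap / 4 <= `|B j z - p z| ->
    loss_mixed <= \sum_(k < K) class_size k * bernKL (B j k) (p k).
  move=> hz; rewrite (bigD1 z) //= -[X in X <= _]addr0; apply: lerD.
    apply: ler_pM; [ | by rewrite divr_ge0 ?sqr_ge0 | exact: class_size_ge | ].
      by rewrite !mulr_ge0 ?ler0n ?exprn_ge0 ?ltW.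
    apply: le_trans (bernKL_ge (B_in01 z) (csol_in01 z P)).
    have -> : gap ^+ 2 / 64 = (gap / 4) ^+ 2 / 4 by field.
    rewrite ler_pM2r // -[X in _ <= X]real_normK ?num_real // !expr2.
    have g0 := gap_gt0; apply: ler_pM => //; lra.
  apply: sumr_ge0 => k _.
  by rewrite mulr_ge0 ?bernKL_ge0 ?B_in01 ?csol_in01 // ltW ?class_size_gt0.
have sep : gap / 2 <= `|B j x - B j y|.
  have := @dist_ge_sub_close _ (Bs j x) (Bs j y) (B j x) (B j y) eps.
  rewrite distrC B_close distrC B_close => /(_ isT isT).
  by have := gap_le nxy; have := eps_le_gap; lra.
case: (lerP (gap / 4) `|B j x - p x|) => [hx|hx]; first exact: far x hx.
apply: (far y); rewrite -pxy; have := ler_distD (p x) (B j x) (B j y).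
by rewrite [`|p x - _|]distrC; lra.
Qed.

Definition block_value (X : seq 'I_K) : R := head 0 (map (Bs j) X).
Definition nonempty_blocks C := all (fun X => X != [::]) C.
Definition search_inv C :=
  [/\ is_partition C, nonempty_blocks C, homogeneous C & sorted <=%R (map block_value C)].

Let K_gt0 : (0 < K)%N.
Proof.
rewrite lt0n; apply/negP => /eqP K0; move: nu_sum1.
rewrite big1 => [/eqP|k _]; first by rewrite eq_sym oner_eq0.
by have := ltn_ord k; move: (nat_of_ord k) => m; rewrite K0.
Qed.

Let mstar := card_distinct (Bs j).
Hypothesis loss_homog_lt_mixed : loss_homog < loss_mixed.

Lemma Qj_csolE C : is_partition C ->
  Qj gam Y j (csol gam Y j C) = (Qclass (csol gam Y j C))%:E.
Proof. by move=> P; apply: QjE => k; exact: csol_in01. Qed.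

Lemma block_valueE C X x : homogeneous C -> X \in C -> x \in X -> Bs j x = block_value X.
Proof.
move=> hom; case: X => [|x0 X'] // XC xX; rewrite /block_value /=.
exact: hom XC x x0 xX (mem_head _ _).
Qed.

Lemma is_partition_merge C b : is_partition C -> (b.+1 < size C)%N ->
  is_partition (merge_at b C).
Proof. by case=> U H hb; split; rewrite flatten_merge_at. Qed.

Lemma nonempty_merge C b : nonempty_blocks C -> (b.+1 < size C)%N ->
  nonempty_blocks (merge_at b C).
Proof.
move=> /allP ne hb; apply/allP => X /mem_merge_at [/ne //|->].
by have := ne _ (mem_nth [::] (ltnW hb)); case: (nth [::] C b).
Qed.

Lemma homogeneous_merge C b : homogeneous C -> (b.+1 < size C)%N ->
  block_value (nth [::] C b) = block_value (nth [::] C b.+1) ->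
  homogeneous (merge_at b C).
Proof.
move=> hom hb e X /mem_merge_at [XC|->]; first exact: hom.
have m1 := mem_nth [::] (ltnW hb); have m2 := mem_nth [::] hb.
have H x : x \in nth [::] C b ++ nth [::] C b.+1 -> Bs j x = block_value (nth [::] C b).
  rewrite mem_cat => /orP[xb|xb]; first exact: block_valueE m1 xb.
  by rewrite e; exact: block_valueE m2 xb.
by move=> x y /H -> /H ->.
Qed.

Lemma sorted_merge C b : nonempty_blocks C -> (b.+1 < size C)%N ->
  sorted <=%R (map block_value C) -> sorted <=%R (map block_value (merge_at b C)).
Proof.
move=> /allP ne hb Hs.
have -> : map block_value (merge_at b C) = take b (map block_value C) ++
    nth 0 (map block_value C) b :: drop b.+2 (map block_value C).
  rewrite /merge_at map_cat /= map_take map_drop (nth_map [::]) ?(ltnW hb) //.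
  by case: (nth [::] C b) (ne _ (mem_nth [::] (ltnW hb))).
apply: subseq_sorted Hs; first exact: le_trans.
by apply: subseq_take_nth_drop2; rewrite size_map.
Qed.

Lemma mixed_merge C b : nonempty_blocks C -> (b.+1 < size C)%N ->
  block_value (nth [::] C b) != block_value (nth [::] C b.+1) -> mixed (merge_at b C).
Proof.
move=> /allP ne hb e.
exists (nth [::] C b ++ nth [::] C b.+1); first by rewrite /merge_at mem_cat inE eqxx orbT.
move: e (ne _ (mem_nth [::] (ltnW hb))) (ne _ (mem_nth [::] hb)).
case: (nth [::] C b) => [|x X1] //; case: (nth [::] C b.+1) => [|y Y1] // e _ _.
by exists x, y; split; rewrite ?mem_cat ?mem_head ?orbT.
Qed.

Lemma mstar_le_values C : is_partition C -> homogeneous C ->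
  (mstar <= size (undup (map block_value C)))%N.
Proof.
case=> _ H hom; apply: uniq_leq_size; first exact: undup_uniq.
move=> z; rewrite mem_undup => /mapP [k _ ->].
have [bC kb] := block_in (H k).
by rewrite mem_undup (block_valueE hom bC kb) map_f.
Qed.

Lemma values_le_mstar C : nonempty_blocks C ->
  (size (undup (map block_value C)) <= mstar)%N.
Proof.
move=> /allP ne; apply: uniq_leq_size; first exact: undup_uniq.
move=> z; rewrite mem_undup => /mapP [X XC ->].
move: (ne X XC); case: X XC => [|x X'] // _ _.
by rewrite mem_undup /block_value /= map_f // mem_enum.
Qed.

Lemma mstar_gt0 : (0 < mstar)%N.
Proof.
have : Bs j (Ordinal K_gt0) \in undup [seq Bs j k | k <- enum 'I_K].
  by rewrite mem_undup map_f // mem_enum.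
by rewrite /mstar /card_distinct; case: (undup _).
Qed.

Lemma mstar_leK : (mstar <= K)%N.
Proof.
by rewrite /mstar /card_distinct (leq_trans (size_undup _)) // size_map size_enum_ord.
Qed.

Lemma adjacent_equal_values C : search_inv C -> (mstar < size C)%N ->
  exists2 b, (b.+1 < size C)%N &
    block_value (nth [::] C b) = block_value (nth [::] C b.+1).
Proof.
case=> _ ne _ Hs hm.
have nuq : ~~ uniq (map block_value C).
  by rewrite -ltn_size_undup size_map (leq_ltn_trans (values_le_mstar ne) hm).
have [i [hi he]] := sorted_adjacent_eq 0 Hs nuq.
rewrite size_map in hi; exists i => //.
by rewrite -!(nth_map [::] 0) // ltnW.
Qed.

Lemma part_step_spec C : (1 < size C)%N ->
  exists2 b, (b.+1 < size C)%N & part_step nu B Y j C = merge_at b C /\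
    forall b', (b'.+1 < size C)%N ->
      (Qj gam Y j (csol gam Y j (merge_at b' C)) <=
       Qj gam Y j (csol gam Y j (merge_at b C)))%E.
Proof.
move=> s2; set f := fun b => Qj gam Y j (csol gam Y j (merge_at b C)).
have sC : size C = (size C).-1.+1 by rewrite prednK // ltnW.
have n0 : (0 < (size C).-1)%N by rewrite -ltnS -sC.
have [bl hmax] := first_argmax_spec f n0.
exists (first_argmax f (size C).-1); first by rewrite sC ltnS.
by split => // b'; rewrite sC ltnS; exact: hmax.
Qed.

(* A mixed merge would lose more than the homogeneous merge that is available. *)
Lemma part_step_inv C : search_inv C -> (mstar < size C)%N ->
  search_inv (part_step nu B Y j C) /\ size (part_step nu B Y j C) = (size C).-1.
Proof.
move=> I hm; have [P ne hom Hs] := I.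
have s2 : (1 < size C)%N by apply: leq_ltn_trans hm; exact: mstar_gt0.
have [b hb [-> hmax]] := part_step_spec s2.
split; last by rewrite size_merge_at.
case: (eqVneq (block_value (nth [::] C b)) (block_value (nth [::] C b.+1))) => e.
  split; [exact: is_partition_merge | exact: nonempty_merge |
          exact: homogeneous_merge | exact: sorted_merge].
exfalso; have [b0 hb0 e0] := adjacent_equal_values I hm.
have Pb0 := is_partition_merge P hb0; have Pb := is_partition_merge P hb.
have := hmax b0 hb0; rewrite !Qj_csolE // lee_fin.
have := Qclass_loss_homog Pb0 (homogeneous_merge hom hb0 e0).
have := Qclass_loss_mixed Pb (mixed_merge ne hb e).
by have := loss_homog_lt_mixed; lra.
Qed.

Lemma Bs_le_of_B_le a b : B j a <= B j b -> Bs j a <= Bs j b.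
Proof.
move=> hab; rewrite leNgt; apply/negP => hlt.
have ne : Bs j b != Bs j a by rewrite lt_eqF.
have := gap_le ne; rewrite distrC ger0_norm; last by rewrite subr_ge0 ltW.
move: (B_close a) (B_close b); rewrite !ler_distl => /andP[? ?] /andP[? ?] hg.
by have := eps_le_gap; have := gap_gt0; lra.
Qed.

Lemma part_init_inv : search_inv (part_init B j) /\ size (part_init B j) = K.
Proof.
have tot : total (fun a b : 'I_K => B j a <= B j b) by move=> x y; exact: le_total.
split; last by rewrite size_map size_sort size_enum_ord.
split.
- split; rewrite /part_init flatten_seq1 ?sort_uniq ?enum_uniq // => k.
  by rewrite mem_sort mem_enum.
- by apply/allP => X /mapP [k _ ->].
- by move=> X /mapP [k _ ->] x y; rewrite !inE => /eqP -> /eqP ->.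
- rewrite /part_init -map_comp.
  rewrite (eq_map (_ : block_value \o (fun k => [:: k]) =1 Bs j)) // sorted_map.
  by apply: sub_sorted (sort_sorted tot _) => x y; exact: Bs_le_of_B_le.
Qed.

Lemma parts_inv t : (t <= K - mstar)%N ->
  search_inv (parts nu B Y j t) /\ size (parts nu B Y j t) = (K - t)%N.
Proof.
elim: t => [|t IH] ht; first by rewrite subn0; exact: part_init_inv.
have [It st] := IH (ltnW ht).
have hm : (mstar < size (parts nu B Y j t))%N by rewrite st ltn_subRL addnC -ltn_subRL.
rewrite /parts iterS -/(parts nu B Y j t).
have [I2 s2] := part_step_inv It hm.
by split => //; rewrite s2 st subnS.
Qed.

Lemma parts_partition t : (t < K)%N ->
  [/\ is_partition (parts nu B Y j t), nonempty_blocks (parts nu B Y j t) &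
      size (parts nu B Y j t) = (K - t)%N].
Proof.
elim: t => [|t IH] ht; first by have [[P ne _ _] sz] := part_init_inv; rewrite subn0.
have [P ne st] := IH (ltnW ht).
have s2 : (1 < size (parts nu B Y j t))%N by rewrite st ltn_subRL addn1.
rewrite /parts iterS -/(parts nu B Y j t).
have [b hb [-> _]] := part_step_spec s2.
split; [exact: is_partition_merge | exact: nonempty_merge |].
by rewrite size_merge_at // st subnS.
Qed.

Lemma cand_in01 m : (0 < m <= K)%N -> forall k, 0 < cand nu B Y j m k < 1.
Proof.
case/andP=> m0 mK k; rewrite /cand; case: eqP => _; first exact: B_in01.
have hKm : (K - m < K)%N by rewrite ltn_subrL m0 K_gt0.
by have [P _ _] := parts_partition hKm; exact: csol_in01.
Qed.

Lemma Qclass_cand_ge m : (mstar <= m <= K)%N ->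
  Qclass (B j) - loss_homog <= Qclass (cand nu B Y j m).
Proof.
case/andP=> hm mK; rewrite /cand; case: eqP => _.
  rewrite lerBlDr lerDl /loss_homog; apply: mulr_ge0; first by rewrite mulr_ge0.
  by apply: divr_ge0; [rewrite mulr_ge0 ?sqr_ge0 | exact: ltW].
have [[P _ hom _] _] := parts_inv (leq_sub2l K hm).
by have := Qclass_loss_homog P hom; lra.
Qed.

Lemma Qclass_cand_le_mixed m : (0 < m < mstar)%N ->
  Qclass (cand nu B Y j m) <= Qclass (B j) - loss_mixed.
Proof.
case/andP=> m0 hm; have mK : (m < K)%N := leq_trans hm mstar_leK.
rewrite /cand; case: eqP => [e|_]; first by rewrite e ltnn in mK.
have hKm : (K - m < K)%N by rewrite ltn_subrL m0 K_gt0.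
have [P ne sz] := parts_partition hKm.
rewrite subKn ?(ltnW mK) // in sz.
case: (homogeneous_or_mixed (parts nu B Y j (K - m))) => [hom|mix].
  have := leq_trans (mstar_le_values P hom) (size_undup _).
  by rewrite size_map sz leqNgt hm.
by have := Qclass_loss_mixed P mix; lra.
Qed.

Variable rho : R.
Hypothesis rho_ge1 : 1 <= rho.
Hypothesis loss_homog_lt_lnN : 2 * loss_homog < ln (N%:R : R).
Hypothesis penalty_lt_loss :
  K%:R * (ln (N%:R : R) + 2 * ln rho) < 2 * (loss_mixed - loss_homog).

Lemma EBICE m : (0 < m <= K)%N -> EBIC nu B Y j rho m =
  (- (2 * Qclass (cand nu B Y j m)) + m%:R * (ln (N%:R : R) + 2 * ln rho))%:E.
Proof.
move=> hm; rewrite /EBIC QjE; last exact: cand_in01.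
by rewrite -EFinM -EFinN -EFinD; congr (_%:E); ring.
Qed.

Lemma mtilde_eq_mstar : mtilde nu B Y j rho = mstar.
Proof.
have m0 := mstar_gt0; have mK := mstar_leK.
rewrite /mtilde (@first_argmin_unique _ _ _ mstar.-1); first by rewrite prednK.
  by rewrite prednK.
move=> t tK tne; rewrite prednK //.
have hmt : t.+1 != mstar by apply: contra tne => /eqP <-.
rewrite !EBICE ?m0 ?mK //= lte_fin.
set L := ln (N%:R : R) + 2 * ln rho.
have lnN0 : 0 <= ln (N%:R : R) by rewrite ln_ge0 // ler1n.
have L0 : ln (N%:R : R) <= L by rewrite /L lerDl mulr_ge0 // ln_ge0.
have hs : Qclass (B j) - loss_homog <= Qclass (cand nu B Y j mstar).
  by apply: Qclass_cand_ge; rewrite leqnn.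
case: (ltngtP t.+1 mstar) => [lt|gt|eq]; last by rewrite eq eqxx in hmt.
- have hl := Qclass_cand_le_mixed (m := t.+1) lt.
  have hK : mstar%:R * L <= K%:R * L by rewrite ler_wpM2r ?ler_nat //; lra.
  have ht0 : 0 <= t.+1%:R * L by rewrite mulr_ge0 ?ler0n //; lra.
  by have := penalty_lt_loss; rewrite -/L; lra.
- have hu := Qclass_le (cand_in01 (m := t.+1) tK).
  have hK : mstar%:R * L + L <= t.+1%:R * L.
    by rewrite -[X in _ + X]mul1r -mulrDl ler_wpM2r ?natr1 ?ler_nat //; lra.
  by have := loss_homog_lt_lnN; lra.
Qed.

Lemma same_block C u w : search_inv C -> size C = mstar -> Bs j u = Bs j w ->
  block C u = block C w.
Proof.
case=> P ne hom _ sz e; have [U H] := P.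
have [bu ub] := block_in (H u); have [bw wb] := block_in (H w).
apply/eqP/negPn/negP => neq.
have nuq : ~~ uniq (map block_value C).
  apply: contra neq => uq; apply/eqP; apply: (uniq_map_inj_in uq bu bw).
  by rewrite -(block_valueE hom bu ub) -(block_valueE hom bw wb).
have := mstar_le_values P hom; rewrite -ltn_size_undup size_map in nuq.
by rewrite -sz leqNgt nuq.
Qed.

Lemma refined_eq u w : Bs j u = Bs j w ->
  refined nu B Y j rho u = refined nu B Y j rho w.
Proof.
move=> e; rewrite /refined mtilde_eq_mstar /cand.
have [I sz] := parts_inv (leqnn (K - mstar)); rewrite subKn ?mstar_leK // in sz.
have bl := same_block I sz e.
case: eqP => [eK|_]; last by rewrite !csolE bl.
move: I bl; rewrite eK subnn => -[[_ H] _ _ _] bl.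
have [bu ub] := block_in (H u); have [_ wb] := block_in (H w).
have [x ex] : exists x, block (part_init B j) u = [:: x].
  by case/mapP: bu => x _ ->; exists x.
by move: ub wb; rewrite -bl ex !inE => /eqP -> /eqP ->.
Qed.

Lemma refined_neq u w : Bs j u != Bs j w ->
  refined nu B Y j rho u != refined nu B Y j rho w.
Proof.
move=> ne; rewrite /refined mtilde_eq_mstar /cand.
have sep (p : 'I_K -> R) : `|p u - Bs j u| <= eps -> `|p w - Bs j w| <= eps -> p u != p w.
  move=> hu hw; apply/eqP => pe.
  have := @dist_ge_sub_close _ (Bs j u) (Bs j w) (p u) (p w) eps.
  rewrite distrC hu distrC hw pe subrr normr0 => /(_ isT isT).
  by have := gap_le ne; have := eps_le_gap; have := gap_gt0; lra.
have [[P _ hom _] _] := parts_inv (leqnn (K - mstar)).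
case: ifP => _; first exact: sep (B j) (B_close u) (B_close w).
exact: sep _ (csol_close u P hom) (csol_close w P hom).
Qed.

Lemma refined_spec : [/\ mtilde nu B Y j rho = mstar,
  forall u w, Bs j u = Bs j w -> refined nu B Y j rho u = refined nu B Y j rho w &
  forall u w, Bs j u != Bs j w -> refined nu B Y j rho u != refined nu B Y j rho w].
Proof. by split; [exact: mtilde_eq_mstar | exact: refined_eq | exact: refined_neq]. Qed.

End PseudoLikelihoodAtMLE.

(** * Asymptotics *)

Section Eventually.
Variable R : realType.

Lemma near_sqrt_ge (r : R) : \forall N \near \oo, r <= Num.sqrt (N%:R : R).
Proof.
near=> N; apply: le_trans (ler_norm r) _.
rewrite -sqrtr_sqr ler_sqrt; last exact: ler0n.
by near: N; exact: nbhs_infty_ger.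
Unshelve. all: by end_near.
Qed.

Lemma near_div_sqrt_le (M c : R) : 0 < c -> \forall N \near \oo, M / Num.sqrt (N%:R : R) <= c.
Proof.
move=> c0; near=> N; have hN : `|M| / c + 1 <= Num.sqrt (N%:R : R).
  by near: N; exact: near_sqrt_ge.
have k0 : 0 <= `|M| / c by rewrite divr_ge0 // ltW.
have s0 : 0 < Num.sqrt (N%:R : R) by lra.
rewrite ler_pdivrMr // (le_trans (ler_norm M)) // -ler_pdivrMl //; lra.
Unshelve. all: by end_near.
Qed.

Lemma near_ln_gt (a : R) : \forall N \near \oo, a < ln (N%:R : R).
Proof.
near=> N; have hN : expR a + 1 <= N%:R by near: N; exact: nbhs_infty_ger.
have e0 := expR_gt0 a.
rewrite -[X in X < _]expRK ltr_ln ?posrE //; first lra.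
by apply: lt_le_trans hN; lra.
Unshelve. all: by end_near.
Qed.

(* [ln N <= 2 sqrt N], so the linear term dominates. *)
Lemma near_lin_gt_ln (a b c : R) : 0 < c ->
  \forall N \near \oo, a * ln (N%:R : R) + b < c * N%:R.
Proof.
move=> c0; near=> N.
have hs : (2 * `|a| + `|b|) / c + 1 <= Num.sqrt (N%:R : R).
  by near: N; exact: near_sqrt_ge.
set s := Num.sqrt (N%:R : R) in hs *.
have na := normr_ge0 a; have nb := normr_ge0 b.
have k0 : 0 <= (2 * `|a| + `|b|) / c by apply: divr_ge0; [lra | exact: ltW].
have s1 : 1 <= s by lra.
have N1 : 0 < (N%:R : R) by rewrite -sqrtr_gt0 -/s; lra.
have sN : s * s = N%:R by rewrite -expr2 sqr_sqrtr ?ltW.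
have lnN0 : 0 <= ln (N%:R : R) by rewrite ln_ge0 // -sN; nra.
have la : a * ln (N%:R : R) <= 2 * `|a| * s.
  apply: le_trans (_ : `|a| * ln (N%:R : R) <= _).
    by rewrite ler_wpM2r // ler_norm.
  by rewrite -mulrA mulrCA ler_wpM2l // ln_le_2sqrt.
have cs : 2 * `|a| + `|b| < c * s.
  by rewrite -ltr_pdivrMl // mulrC; lra.
have p1 : (2 * `|a| + `|b|) * s < c * N%:R by rewrite -sN mulrA ltr_pM2r //; lra.
have p2 : `|b| <= `|b| * s by apply: ler_peMr.
have := ler_norm b; lra.
Unshelve. all: by end_near.
Qed.

End Eventually.

Section Norms.
Variable R : realType.

Lemma sqr_le_sum (I : finType) (F : I -> R) i : F i ^+ 2 <= \sum_k F k ^+ 2.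
Proof. by rewrite (bigD1 i) //= lerDl sumr_ge0 // => k _; rewrite sqr_ge0. Qed.

Lemma vnorm_ge K (v : 'I_K -> R) k : `|v k| <= vnorm v.
Proof.
rewrite /vnorm -sqrtr_sqr ler_sqrt ?sqr_le_sum //.
by rewrite sumr_ge0 // => i _; rewrite sqr_ge0.
Qed.

Lemma frob_ge J K (A : 'I_J -> 'I_K -> R) j k : `|A j k| <= frob A.
Proof.
rewrite /frob -sqrtr_sqr ler_sqrt; last first.
  by rewrite sumr_ge0 // => i _; rewrite sumr_ge0 // => l _; rewrite sqr_ge0.
apply: le_trans (sqr_le_sum (fun l => A j l) k) _.
rewrite (bigD1 j) //= lerDl sumr_ge0 // => i _.
by rewrite sumr_ge0 // => l _; rewrite sqr_ge0.
Qed.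

End Norms.

(* The sample size [N] stays an explicit argument of [hnu], [hB] and [good_event]. *)
Unset Implicit Arguments.
Section Consistency.
Variables (R : realType) (J K : nat) (nus : 'I_K -> R) (Bs : 'I_J -> 'I_K -> R)
  (hnu : forall N : nat, data N J -> 'I_K -> R)
  (hB : forall N : nat, data N J -> 'I_J -> 'I_K -> R).
Hypothesis nus_sum1 : \sum_(k < K) nus k = 1.
Hypothesis nus_gt0 : forall k, 0 < nus k.
Hypothesis Bs_in01 : forall j k, 0 < Bs j k < 1.

Let nus_ge0 k : 0 <= nus k. Proof. exact: ltW. Qed.
Let Bs01 j k : 0 <= Bs j k <= 1. Proof. by have /andP[h1 h2] := Bs_in01 j k; rewrite !ltW. Qed.

Definition good_event (M : R) (N : nat) (Y : data N J) : bool :=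
  (Num.sqrt (N%:R : R) * `|vnorm (fun k => hnu N Y k - nus k)| <= M) &&
  (Num.sqrt (N%:R : R) * `|frob (fun j k => hB N Y j k - Bs j k)| <= M).
Set Implicit Arguments.

Section Tightness.
Hypothesis hnu_rate : Op_root_N nus Bs (fun N Y => vnorm (fun k => hnu N Y k - nus k)).
Hypothesis hB_rate : Op_root_N nus Bs (fun N Y => frob (fun j k => hB N Y j k - Bs j k)).

Lemma prob_good_event e : 0 < e -> exists2 M : R, 0 <= M &
  \forall N \near \oo, 1 - e < prob nus Bs (good_event M N).
Proof.
move=> e0; have e2 : 0 < e / 2 by rewrite divr_gt0.
have [M1 [N1 H1]] := hnu_rate e2; have [M2 [N2 H2]] := hB_rate e2.
set M := Num.max (Num.max M1 M2) 0.
have [hM1 hM2] : M1 <= M /\ M2 <= M by rewrite !le_max !lexx ?orbT.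
exists M; first by rewrite le_max lexx orbT.
near=> N.
have hN1 : (N1 <= N)%N by near: N; exact: nbhs_infty_ge.
have hN2 : (N2 <= N)%N by near: N; exact: nbhs_infty_ge.
have p1 := H1 N hN1; have p2 := H2 N hN2.
have hc := probC Bs nus_sum1 (good_event M N).
have hu := prob_predU_le nus_ge0 Bs01
  (fun Y : data N J => M1 < Num.sqrt (N%:R : R) * `|vnorm (fun k => hnu N Y k - nus k)|)
  (fun Y : data N J => M2 < Num.sqrt (N%:R : R) * `|frob (fun j k => hB N Y j k - Bs j k)|).
have hl : prob nus Bs (predC (good_event M N)) <= prob nus Bs (predU
  (fun Y : data N J => M1 < Num.sqrt (N%:R : R) * `|vnorm (fun k => hnu N Y k - nus k)|)
  (fun Y : data N J => M2 < Num.sqrt (N%:R : R) * `|frob (fun j k => hB N Y j k - Bs j k)|)).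
  apply: (le_prob nus_ge0 Bs01) => Y; rewrite /= /good_event negb_and -!ltNge.
  by case/orP => h; apply/orP; [left | right]; apply: le_lt_trans h.
lra.
Unshelve. all: by end_near.
Qed.

Lemma cvg_prob1 (E : forall N, pred (data N J)) :
  (forall M, 0 <= M -> \forall N \near \oo, forall Y, good_event M N Y -> E N Y) ->
  (fun N => prob nus Bs (E N)) @ \oo --> (1 : R).
Proof.
move=> HE; apply/cvgrPdist_lt => e e0.
have [M M0 HM] := prob_good_event e0.
near=> N.
have hg : 1 - e < prob nus Bs (good_event M N) by near: N; exact: HM.
have hE : prob nus Bs (good_event M N) <= prob nus Bs (E N).
  by apply: (le_prob nus_ge0 Bs01); near: N; exact: HE.
have p1 := prob_le1 nus_ge0 nus_sum1 Bs01 (E N).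
by rewrite ger0_norm ?subr_ge0 //; lra.
Unshelve. all: by end_near.
Qed.

End Tightness.

Let nus_le1 k : nus k <= 1.
Proof. by rewrite -nus_sum1 (bigD1 k) //= lerDl sumr_ge0. Qed.

(* Products of factors in (0, 1] give positive bounds that are uniform in the indices. *)
Definition nu_min := \prod_(k < K) nus k.
Definition margin := \prod_(p : 'I_J * 'I_K) (Bs p.1 p.2 * (1 - Bs p.1 p.2)).
Definition gap (j : 'I_J) :=
  \prod_(p : 'I_K * 'I_K | Bs j p.1 != Bs j p.2) `|Bs j p.1 - Bs j p.2|.

Lemma nu_min_gt0 : 0 < nu_min.
Proof. exact: prodr_gt0. Qed.

Lemma nu_min_le k : nu_min <= nus k.
Proof.
have hF i : (fun _ => true) i -> 0 < nus i <= 1 by rewrite nus_gt0 nus_le1.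
by have /andP[_ ->] := prodr_gt0_le_factor hF (isT : (fun _ : 'I_K => true) k).
Qed.

Let margin_factor (p : 'I_J * 'I_K) : 0 < Bs p.1 p.2 * (1 - Bs p.1 p.2) <= 1.
Proof.
have /andP[h1 h2] := Bs_in01 p.1 p.2.
by apply/andP; split; [rewrite mulr_gt0 ?subr_gt0 | nra].
Qed.

Lemma margin_gt0 : 0 < margin.
Proof. by apply: prodr_gt0 => p _; have /andP[] := margin_factor p. Qed.

Lemma Bs_in j k : margin <= Bs j k <= 1 - margin.
Proof.
have m : margin <= Bs j k * (1 - Bs j k).
  by have /andP[] := @prodr_gt0_le_factor _ _ (fun _ => true) _ (j, k) (fun p _ => margin_factor p) isT.
have /andP[h1 h2] := Bs_in01 j k.
have m1 : Bs j k * (1 - Bs j k) <= Bs j k by nra.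
have m2 : Bs j k * (1 - Bs j k) <= 1 - Bs j k by nra.
by apply/andP; split; lra.
Qed.

Let gap_factor j (p : 'I_K * 'I_K) : Bs j p.1 != Bs j p.2 -> 0 < `|Bs j p.1 - Bs j p.2| <= 1.
Proof.
move=> ne; rewrite normr_gt0 subr_eq0 ne /=.
have /andP[h1 h2] := Bs_in01 j p.1; have /andP[h3 h4] := Bs_in01 j p.2.
by rewrite ler_norml; apply/andP; split; lra.
Qed.

Lemma gap_gt0 j : 0 < gap j.
Proof. by apply: prodr_gt0 => p /gap_factor /andP[]. Qed.

Lemma gap_le j g h : Bs j g != Bs j h -> gap j <= `|Bs j g - Bs j h|.
Proof.
by move=> ne; have /andP[] // := @prodr_gt0_le_factor _ _ _ _ (g, h) (@gap_factor j) ne.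
Qed.

Section Deterministic.
Variables (rho : R) (j : 'I_J).
Hypothesis mle : forall N (Y : data N J), is_MLE (hnu N Y) (hB N Y) Y.
Hypothesis rho_ge1 : 1 <= rho.

Lemma good_event_close M N (Y : data N J) : (0 < N)%N -> good_event M N Y ->
  (forall k, `|hnu N Y k - nus k| <= M / Num.sqrt (N%:R : R)) /\
  (forall j k, `|hB N Y j k - Bs j k| <= M / Num.sqrt (N%:R : R)).
Proof.
move=> N0 /andP[gnu gB]; have s0 : 0 < Num.sqrt (N%:R : R) by rewrite sqrtr_gt0 ltr0n.
split=> [k|j' k].
  apply: le_trans (vnorm_ge (fun k => hnu N Y k - nus k) k) _; rewrite ler_pdivlMr // mulrC; apply: le_trans gnu.
  by apply: ler_wpM2l; [exact: ltW | exact: ler_norm].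
apply: le_trans (frob_ge (fun j k => hB N Y j k - Bs j k) j' k) _; rewrite ler_pdivlMr // mulrC; apply: le_trans gB.
by apply: ler_wpM2l; [exact: ltW | exact: ler_norm].
Qed.

Lemma good_event_refined M : 0 <= M -> \forall N \near \oo, forall Y : data N J,
  good_event M N Y ->
  [/\ mtilde (hnu N Y) (hB N Y) Y j rho = card_distinct (Bs j),
      forall g h, Bs j g = Bs j h ->
        refined (hnu N Y) (hB N Y) Y j rho g = refined (hnu N Y) (hB N Y) Y j rho h &
      forall g h, Bs j g != Bs j h ->
        refined (hnu N Y) (hB N Y) Y j rho g != refined (hnu N Y) (hB N Y) Y j rho h].
Proof.
move=> M0; set lo := margin / 2; set nu0 := nu_min / 2.
have lo0 : 0 < lo by rewrite divr_gt0 ?margin_gt0.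
have nu00 : 0 < nu0 by rewrite divr_gt0 ?nu_min_gt0.
set A := K%:R * (8 * M ^+ 2 / lo).
set c := nu0 * lo ^+ J * (gap j ^+ 2 / 64).
have c0 : 0 < c.
  apply: mulr_gt0; first by apply: mulr_gt0 => //; exact: exprn_gt0.
  by apply: divr_gt0 => //; apply: exprn_gt0; exact: gap_gt0.
near=> N.
have N0 : (0 < N)%N by near: N; exact: nbhs_infty_gt.
have e_nu : M / Num.sqrt (N%:R : R) <= nu0 by near: N; exact: near_div_sqrt_le.
have e_lo : M / Num.sqrt (N%:R : R) <= lo by near: N; exact: near_div_sqrt_le.
have e_gap : M / Num.sqrt (N%:R : R) <= gap j / 4.
  by near: N; apply: near_div_sqrt_le; rewrite divr_gt0 ?gap_gt0.
have sep : 0 * ln (N%:R : R) + A < c * N%:R by near: N; exact: near_lin_gt_ln.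
have lnN : 2 * A < ln (N%:R : R) by near: N; exact: near_ln_gt.
have pen : K%:R * ln (N%:R : R) + (2 * K%:R * ln rho + 2 * A) < (2 * c) * N%:R.
  by near: N; apply: near_lin_gt_ln; rewrite mulr_gt0.
move=> Y gY; have [dnu dB] := good_event_close N0 gY.
set eps := M / Num.sqrt (N%:R : R) in e_nu e_lo e_gap dnu dB.
have hA : loss_homog N K lo eps = A.
  have sN : Num.sqrt (N%:R : R) ^+ 2 = N%:R by rewrite sqr_sqrtr ?ler0n.
  rewrite /loss_homog /A /eps expr_div_n sN; field.
  by rewrite !gt_eqF ?ltr0n.
have hc : loss_mixed N J nu0 lo (gap j) = N%:R * c by rewrite /loss_mixed /c; ring.
have nu_ge k : nu0 <= hnu N Y k.
  move: (dnu k) (nu_min_le k) e_nu; rewrite ler_distl /nu0 => /andP[h _] hm he; lra.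
have B_in j' k : lo <= hB N Y j' k <= 1 - lo.
  move: (dB j' k) (Bs_in j' k) e_lo; rewrite ler_distl /lo => /andP[h1 h2] /andP[m1 m2] he.
  by apply/andP; split; lra.
have gap4 : 4 * eps <= gap j by lra.
have hsep : loss_homog N K lo eps < loss_mixed N J nu0 lo (gap j) by rewrite hA hc; lra.
have hln : 2 * loss_homog N K lo eps < ln (N%:R : R) by rewrite hA.
have hpen : K%:R * (ln (N%:R : R) + 2 * ln rho) <
    2 * (loss_mixed N J nu0 lo (gap j) - loss_homog N K lo eps) by rewrite hA hc; lra.
have spec := refined_spec (mle Y) nu00 nu_ge lo0 B_in N0 (dB j) (gap_gt0 j) (@gap_le j)
  gap4 hsep rho_ge1 hln hpen.
exact: spec.
Unshelve. all: by end_near.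
Qed.

End Deterministic.

End Consistency.

Theorem theorem1 (R : realType) (J K : nat)
  (nus : 'I_K -> R) (Bs : 'I_J -> 'I_K -> R)
  (hnu : forall N : nat, data N J -> 'I_K -> R)
  (hB : forall N : nat, data N J -> 'I_J -> 'I_K -> R)
  (rho : R) :
  \sum_(k < K) nus k = 1 ->
  (forall (N : nat) (Y : data N J), is_MLE (hnu N Y) (hB N Y) Y) ->
  (* (A1) *)
  Op_root_N nus Bs (fun N Y => vnorm (fun k => hnu N Y k - nus k)) ->
  Op_root_N nus Bs (fun N Y => frob (fun j k => hB N Y j k - Bs j k)) ->
  (* (A2) *)
  (forall j k, 0 < Bs j k < 1) ->
  (forall k, 0 < nus k) ->
  (* (A3) *)
  1 <= rho ->
  forall j : 'I_J,
    [/\ (fun N : nat =>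
           prob nus Bs (fun Y : data N J =>
             mtilde (hnu N Y) (hB N Y) Y j rho == card_distinct (Bs j)))
          @ \oo --> (1 : R),
        (forall g h : 'I_K, Bs j g = Bs j h ->
           (fun N : nat =>
              prob nus Bs (fun Y : data N J =>
                refined (hnu N Y) (hB N Y) Y j rho g ==
                refined (hnu N Y) (hB N Y) Y j rho h))
             @ \oo --> (1 : R)) &
        (forall g h : 'I_K, Bs j g != Bs j h ->
           (fun N : nat =>
              prob nus Bs (fun Y : data N J =>
                refined (hnu N Y) (hB N Y) Y j rho g !=
                refined (hnu N Y) (hB N Y) Y j rho h))
             @ \oo --> (1 : R))].
Proof.
move=> nus_sum1 mle hnu_rate hB_rate Bs_in01 nus_gt0 rho_ge1 j.
have cvg1 := cvg_prob1 nus_sum1 nus_gt0 Bs_in01 hnu_rate hB_rate.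
have spec M (M0 : 0 <= M) := good_event_refined nus_sum1 nus_gt0 Bs_in01 j mle rho_ge1 M0.
split=> [|g h e|g h e]; apply: cvg1 => M M0;
  apply: filterS (spec M M0) => N H Y /H[mtildeE refined_eqE refined_neqE].
- by rewrite mtildeE.
- by rewrite (refined_eqE _ _ e).
- exact: refined_neqE _ _ e.
Qed.
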